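(* With $F(q)$ as in the context, write $F(q)=\exp\left(\sum_{d\ge1}y'_dq^d\right)$. Then for every $d\ge1$, $$y'_d=\sum_{0<d_1<\dots<d_r=d}\frac{y_{d_1}\prod_{i=2}^r\left(x_{d_i-d_{i-1}}d_{i-1}\right)}{r!}.$$
   Context: $x_1,x_2,\dots,y_1,y_2,\dots$ are indeterminates and $F(q)=\sum_{d\ge0}\sum_{0=d_0<d_1<\dots<d_r=d}\frac{\prod_{i=1}^r(y_{d_i-d_{i-1}}+x_{d_i-d_{i-1}}d_{i-1})}{r!}q^d$, a formal power series in $q$ with constant term $1$ and coefficients in $\mathbb Q[x_k,y_k]_{k\ge1}$. *)

From HB Require Import structures.
From mathcomp Require Import all_boot all_order all_algebra.
Set Implicit Arguments. Unset Strict Implicit. Unset Printing Implicit Defensive.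
Import Order.TTheory GRing.Theory Num.Theory.
Local Open Scope ring_scope.

(* Formal power series in q over a commutative Q-algebra A,
   represented by their coefficient sequences nat -> A. *)
Section PS.
Variable A : comAlgType rat.

Definition ps1 : nat -> A := fun n => (n == 0)%:R.

Definition psmul (f g : nat -> A) : nat -> A :=
  fun n => \sum_(i < n.+1) f i * g (n - i)%N.

Definition psexpn (f : nat -> A) (k : nat) : nat -> A := iter k (psmul f) ps1.

(* exp(f) = sum_k f^k / k!, for f with zero constant term
   (then only k <= n contributes to the coefficient of q^n). *)
Definition psexp (f : nat -> A) : nat -> A :=
  fun n => \sum_(k < n.+1) ((k`!)%:R^-1 : rat) *: psexpn f k n.

(* A chain 0 = d_0 < d_1 < ... < d_r = d, given as s = [:: d_1; ...; d_r]. *)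
Definition chainb (d : nat) (s : seq nat) : bool :=
  sorted ltn (0%N :: s) && (last 0%N s == d).

Definition chain_at (s : seq nat) (i : nat) : nat := nth 0%N (0%N :: s) i.

Variables x y : nat -> A.

Definition Fser : nat -> A := fun d =>
  \sum_(r < d.+1) \sum_(t : r.-tuple 'I_d.+1 | chainb d (map val t))
     ((r`!)%:R^-1 : rat) *:
       \prod_(i < r)
         (y (chain_at (map val t) i.+1 - chain_at (map val t) i)%N
          + x (chain_at (map val t) i.+1 - chain_at (map val t) i)%N
              * (chain_at (map val t) i)%:R).

Definition ylog : nat -> A := fun d =>
  \sum_(r < d.+1) \sum_(t : r.-tuple 'I_d.+1 | chainb d (map val t))
     ((r`!)%:R^-1 : rat) *:
       \prod_(i < r)
         (if i == 0 :> nat then y (chain_at (map val t) 1)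
          else x (chain_at (map val t) i.+1 - chain_at (map val t) i)%N
                 * (chain_at (map val t) i)%:R).

End PS.

From HB Require Import structures.
From mathcomp Require Import all_boot all_order all_algebra ring zify.
From mathcomp Require Import boolp.
Set Implicit Arguments.
Unset Strict Implicit.
Unset Printing Implicit Defensive.
Import GRing.Theory Num.Theory.
Local Open Scope ring_scope.

(* Let θ = q d/dq, let X and Y be the generating series of x and y, and let P_r
   and Q_r be the sums over chains of length r in the formulas for F and for y',
   so that F = Σ_r P_r/r! and G := Σ_d y'_d q^d = Σ_r Q_r/r! - 1.  Appending a
   last step to a chain gives P_(r+1) = P_r Y + θ(P_r) X, Q_1 = Y and
   Q_(j+1) = θ(Q_j) X for j ≥ 1.  As θ is a derivation, these recursions give
   θ(P_r) = Σ_j C(r,j) θ(Q_j) P_(r-j), i.e. θF = θG · F.  Since exp G solves the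
   same linear equation with the same constant term 1, F = exp G; conversely F
   is invertible, so θG, hence G, is determined by F. *)

Lemma sum_triangle (R : zmodType) n (F : nat -> nat -> R) :
  \sum_(i < n.+1) \sum_(j < i.+1) F i j =
  \sum_(j < n.+1) \sum_(k < (n - j).+1) F (k + j)%N j.
Proof.
transitivity (\sum_(i < n.+1) \sum_(j < n.+1) (if (j <= i)%N then F i j else 0)).
  apply: eq_bigr => i _; rewrite (big_ord_widen n.+1 (F i) (ltn_ord i)) big_mkcond.
  by apply: eq_bigr => j _; rewrite ltnS.
rewrite exchange_big; apply: eq_bigr => j _.
rewrite -(big_mkord xpredT (fun i => if (j <= i)%N then F i j else 0)).
rewrite -(big_mkord xpredT (fun k => F (k + j)%N j)).
rewrite (big_cat_nat _ (n:=j)) //; last exact: ltnW.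
rewrite big_nat_cond big1; last first.
  by move=> i /andP[/andP[_ hi] _]; rewrite leqNgt hi.
rewrite Monoid.mul1m -{1}(add0n j) big_addn subSn; last by rewrite -ltnS.
by apply: eq_bigr => i _; rewrite leq_addl.
Qed.

Lemma big_ord_widen_eq0 (R : zmodType) m N (F : nat -> R) : (m <= N)%N ->
  (forall k, (m <= k < N)%N -> F k = 0) -> \sum_(k < m) F k = \sum_(k < N) F k.
Proof.
move=> leMN F0; rewrite (big_ord_widen N F leMN) big_mkcond; apply: eq_bigr => k _.
by case: ifPn => // ltkm; rewrite F0 // ltn_ord andbT leqNgt.
Qed.

Lemma mulrnSI (F : numFieldType) (V : lmodType F) n (a b : V) :
  a *+ n.+1 = b *+ n.+1 -> a = b.
Proof. by rewrite -!(scaler_nat (R := F)) => /scalerI; apply; rewrite pnatr_eq0. Qed.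

Section PowerSeries.
Variable A : comAlgType rat.

Definition pseries := nat -> A.
HB.instance Definition _ := Choice.on pseries.

Definition pseries_add (f g : pseries) : pseries := fun n => f n + g n.
Definition pseries_opp (f : pseries) : pseries := fun n => - f n.
Definition pseries_zero : pseries := fun _ => 0.

Lemma pseries_addA : associative pseries_add.
Proof. by move=> f g h; apply/funext => n; apply: addrA. Qed.
Lemma pseries_addC : commutative pseries_add.
Proof. by move=> f g; apply/funext => n; apply: addrC. Qed.
Lemma pseries_add0 : left_id pseries_zero pseries_add.
Proof. by move=> f; apply/funext => n; apply: add0r. Qed.
Lemma pseries_addN : left_inverse pseries_zero pseries_opp pseries_add.
Proof. by move=> f; apply/funext => n; apply: addNr. Qed.
HB.instance Definition _ :=
  GRing.isZmodule.Build pseries pseries_addA pseries_addC pseries_add0 pseries_addN.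

Lemma psmulC : commutative (@psmul A : pseries -> pseries -> pseries).
Proof.
move=> f g; apply/funext => n; rewrite /psmul (reindex_inj rev_ord_inj) /=.
by apply: eq_bigr => i _; rewrite subSS subKn 1?mulrC // -ltnS.
Qed.

Lemma psmulA : associative (@psmul A : pseries -> pseries -> pseries).
Proof.
move=> f g h; apply/funext => n; rewrite /psmul; symmetry.
under eq_bigr do rewrite big_distrl.
rewrite (sum_triangle n (fun i j => f j * g (i - j)%N * h (n - i)%N)).
apply: eq_bigr => j _; rewrite big_distrr; apply: eq_bigr => k _.
by rewrite addnK -mulrA addnC subnDA.
Qed.

Lemma psmul1 : left_id (@ps1 A : pseries) (@psmul A : pseries -> pseries -> pseries).
Proof.
move=> f; apply/funext => n; rewrite /psmul big_ord_recl /ps1 mul1r subn0.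
by rewrite big1 ?addr0 // => i _; rewrite mul0r.
Qed.

Lemma psmulDl :
  left_distributive (@psmul A : pseries -> pseries -> pseries) pseries_add.
Proof.
move=> f g h; apply/funext => n.
by rewrite /psmul /pseries_add -big_split; apply: eq_bigr => i _; apply: mulrDl.
Qed.
HB.instance Definition _ :=
  GRing.Zmodule_isComPzRing.Build pseries psmulA psmulC psmul1 psmulDl.

Implicit Types f g : pseries.

Lemma pseriesD f g n : (f + g) n = f n + g n. Proof. by []. Qed.
Lemma pseriesM f g n : (f * g) n = \sum_(i < n.+1) f i * g (n - i)%N.
Proof. by []. Qed.
Lemma pseries1 n : (1 : pseries) n = (n == 0)%:R. Proof. by []. Qed.
Lemma pseries0 n : (0 : pseries) n = 0. Proof. by []. Qed.

Lemma pseriesMn f k n : (f *+ k) n = f n *+ k.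
Proof. by elim: k => [|k IH]; rewrite ?mulr0n // !mulrS pseriesD IH. Qed.

Lemma pseries_sum I (r : seq I) (P : pred I) (F : I -> pseries) n :
  (\sum_(i <- r | P i) F i) n = \sum_(i <- r | P i) F i n.
Proof. by elim/big_rec2: _ => // i a b _ <-. Qed.

Lemma pseriesX f k : f ^+ k = psexpn f k.
Proof. by elim: k => // k IH; rewrite exprS IH. Qed.

Lemma pseriesM_last f g n : g 0%N = 0 ->
  (f * g) n = \sum_(m < n) f m * g (n - m)%N.
Proof. by move=> g0; rewrite pseriesM big_ord_recr /= subnn g0 mulr0 addr0. Qed.

Definition vanish_below (m : nat) f := forall n, (n < m)%N -> f n = 0.

Lemma vanish_belowM a b f g :
  vanish_below a f -> vanish_below b g -> vanish_below (a + b) (f * g).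
Proof.
move=> f0 g0 n ltnab; rewrite pseriesM big1 // => i _.
have [ltia|leai] := ltnP i a; first by rewrite f0 ?mul0r.
by rewrite g0 ?mulr0 //; have := ltn_ord i; lia.
Qed.

Lemma vanish_belowX f k : f 0%N = 0 -> vanish_below k (f ^+ k).
Proof.
move=> f0; elim: k => [|k IH] n ltnk //; rewrite exprS.
by apply: (vanish_belowM (a:=1) (b:=k)) => // -[].
Qed.

Lemma pseries_mulIf F f g : F 0%N = 1 -> f * F = g * F -> f = g.
Proof.
move=> F0 eqfg; apply/funext => n; elim/ltn_ind: n => n IH.
move/(congr1 (fun h : pseries => h n)): eqfg.
rewrite !pseriesM !big_ord_recr /= subnn F0 !mulr1.
under eq_bigr => i _ do rewrite IH //.
by move/addrI.
Qed.

End PowerSeries.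

Section DerivationExpansion.
Variables (R : comPzRingType) (D : {additive R -> R}).
Hypothesis DM : forall a b, D (a * b) = D a * b + a * D b.

Lemma derivation1 : D 1 = 0.
Proof.
have D11 := DM 1 1; rewrite !mul1r mulr1 in D11.
by apply: (addrI (D 1)); rewrite addr0 -D11.
Qed.

Variables (X Y : R) (P Q : nat -> R).
Hypothesis P0 : P 0%N = 1.
Hypothesis PS : forall r, P r.+1 = P r * Y + D (P r) * X.
Hypothesis Q0 : Q 0%N = 1.
Hypothesis Q1 : Q 1%N = Y.
Hypothesis QS : forall j, Q j.+2 = D (Q j.+1) * X.

(* With [L f = f Y + D f X], [P r = L^r 1] and [Q j.+1] is the j-th iterate of
   [f |-> D f X] at [Y].  The identity is the coefficient of [t^r / r!] in
   [D (exp (t L) 1) = D S * exp (t L) 1] for [S = sum_(j > 0) t^j Q j / j!],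
   which reflects [exp (t L) 1 = exp S]. *)
Lemma derivation_expansion r :
  D (P r) = \sum_(j < r.+1) D (Q j) * P (r - j)%N *+ 'C(r, j).
Proof.
have DQ0 : D (Q 0%N) = 0 by rewrite Q0 derivation1.
elim: r => [|r IH]; first by rewrite big_ord1 DQ0 mul0r mul0rn P0 derivation1.
(* Leibniz applied to [P r * Y + D (P r) * X] and to the induction hypothesis *)
transitivity (\sum_(j < r.+1) D (Q j) * P (r.+1 - j)%N *+ 'C(r, j)
   + (\sum_(j < r.+1) D (D (Q j) * X) * P (r - j)%N *+ 'C(r, j) + P r * D Y)).
  transitivity (\sum_(j < r.+1) ((D (Q j) * P (r - j)%N *+ 'C(r, j)) * Y
     + D (D (Q j) * P (r - j)%N *+ 'C(r, j)) * X
     + (D (Q j) * P (r - j)%N *+ 'C(r, j)) * D X) + P r * D Y).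
    rewrite PS raddfD !DM IH raddf_sum !mulr_suml !big_split /=; ring.
  rewrite addrA -big_split /=; congr (_ + _); apply: eq_bigr => j _.
  rewrite raddfMn DM subSn; last by rewrite -ltnS.
  rewrite PS DM; move: (nat_of_ord j) ('C(r, j)) => k c.
  ring.
(* Pascal's rule splits the right-hand side into the same two sums *)
rewrite [X in _ + (X + _)]big_ord_recl /= subn0 DQ0 mul0r raddf0 mul0r mul0rn add0r.
have -> : \sum_(i < r) D (D (Q (bump 0 i)) * X) * P (r - bump 0 i)%N *+ 'C(r, bump 0 i)
   = \sum_(i < r) D (Q i.+2) * P (r - i.+1)%N *+ 'C(r, i.+1).
  by apply: eq_bigr => i _; rewrite QS.
rewrite [RHS]big_ord_recl /= DQ0 !mul0r mul0rn add0r.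
under [RHS]eq_bigr do rewrite subSS binS mulrnDr.
rewrite big_split /=; congr (_ + _).
  rewrite big_ord_recl /= DQ0 !mul0r mul0rn add0r.
  rewrite [RHS]big_ord_recr /= bin_small // mulr0n addr0.
  by apply: eq_bigr => i _; rewrite subSS.
by rewrite [RHS]big_ord_recl /= subn0 bin0 mulr1n Q1 mulrC addrC.
Qed.

End DerivationExpansion.

Lemma path_ltn_le_last a s z : path ltn a s -> z \in s -> (z <= last a s)%N.
Proof.
elim: s a => [|b s IH] a //= /andP[_ pbs]; rewrite inE => /predU1P[->|/IH]; last exact.
have := mem_last b s; rewrite inE => /predU1P[->//|].
by move/(allP (order_path_min ltn_trans pbs)); apply: ltnW.
Qed.

Fixpoint chains (r d : nat) : seq (seq nat) :=
  if r is r'.+1 then [seq rcons s d | m <- iota 0 d, s <- chains r' m]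
  else if d == 0%N then [:: [::]] else [::].

Lemma mem_chains r d s : (s \in chains r d) = (size s == r) && chainb d s.
Proof.
elim: r d s => [|r IH] d s /=.
  by case: s => [|z s]; [rewrite /chainb /=; case: d | case: (d == 0%N)].
case/lastP: s => [|s z].
  by apply/negbTE/allpairsPdep => -[m [[|? ?] [_ _]]].
rewrite size_rcons eqSS /chainb /= rcons_path last_rcons.
apply/allpairsPdep/idP => [[m [s' [+ + /rcons_inj[-> ->]]]]|].
  rewrite mem_iota add0n IH /chainb /=; move=> lt_md /and3P[-> -> /eqP->].
  by rewrite lt_md eqxx.
case/and3P=> sz_s /andP[ps lt_sz] /eqP <-; exists (last 0%N s), s; split=> //.
  by rewrite mem_iota.
by rewrite IH sz_s /chainb /= ps eqxx.
Qed.

Lemma chains_last r d s : s \in chains r d -> last 0%N s = d.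
Proof. by rewrite mem_chains => /and3P[_ _ /eqP]. Qed.

Lemma uniq_chains r d : uniq (chains r d).
Proof.
elim: r d => [|r IH] d /=; first by case: (d == 0%N).
apply: allpairs_uniq_dep => [|m _|]; [exact: iota_uniq | exact: IH |].
move=> _ _ /allpairsPdep[m1 [s1 [_ s1_in ->]]] /allpairsPdep[m2 [s2 [_ s2_in ->]]].
move=> /= /rcons_inj[eq_s]; subst s2.
by move: s1_in s2_in => /chains_last <- /chains_last <-.
Qed.

Lemma big_tuple_chains (R : zmodType) d r (F : seq nat -> R) :
  \sum_(t : r.-tuple 'I_d.+1 | chainb d (map val t)) F (map val t) =
  \sum_(s <- chains r d) F s.
Proof.
rewrite -(big_map (fun t : r.-tuple 'I_d.+1 => map val t) (chainb d) F) -big_filter.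
apply/perm_big/uniq_perm; last 1 first.
- move=> s; rewrite mem_filter mem_chains andbC.
  apply/andP/andP => [[/mapP[t _ ->] ->]|[/eqP sz_s chain_s]].
    by rewrite size_map size_tuple.
  split=> //; apply/mapP; have sz_s' : size (map (@inord d) s) == r by rewrite size_map sz_s.
  exists (Tuple sz_s'); first exact: mem_index_enum.
  rewrite /= -map_comp map_id_in // => z z_s /=; rewrite inordK // ltnS.
  by case/andP: chain_s => ps /eqP <-; apply: path_ltn_le_last.
- rewrite filter_uniq // map_inj_uniq ?index_enum_uniq //.
  by move=> t1 t2 /(inj_map val_inj) /val_inj.
- exact: uniq_chains.
Qed.

Section PowerSeriesCalculus.
Variable A : comAlgType rat.
Local Notation pseries := (pseries A).
Implicit Types (f g : pseries) (F G : nat -> pseries).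

Definition chain_weight (W : nat -> nat -> nat -> A) r (s : seq nat) : A :=
  \prod_(i < r) W i (chain_at s i) (chain_at s i.+1).

Definition chain_sum W r : pseries := fun d => \sum_(s <- chains r d) chain_weight W r s.

Lemma chain_sum0 W : chain_sum W 0 = 1.
Proof.
apply/funext => -[|d]; rewrite /chain_sum /= ?big_seq1 ?big_nil //.
by rewrite /chain_weight big_ord0.
Qed.

Lemma chain_weight_rcons W s d :
  chain_weight W (size s).+1 (rcons s d) =
  chain_weight W (size s) s * W (size s) (last 0%N s) d.
Proof.
have chain_at_rcons i : (i <= size s)%N -> chain_at (rcons s d) i = chain_at s i.
  by move=> le_is; rewrite /chain_at -rcons_cons nth_rcons /= ltnS le_is.
rewrite /chain_weight big_ord_recr /=; congr (_ * W _ _ _).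
- by apply: eq_bigr => i _; rewrite !chain_at_rcons // ltnW.
- by rewrite chain_at_rcons // /chain_at -[size s]/((size (0%N :: s)).-1) nth_last.
- by rewrite /chain_at -rcons_cons nth_rcons /= ltnn eqxx.
Qed.

Lemma chain_sumS W r d : chain_sum W r.+1 d = \sum_(m < d) chain_sum W r m * W r m d.
Proof.
rewrite /chain_sum /= big_allpairs_dep /= -{1}(subn0 d) -/(index_iota 0 d) big_mkord.
apply: eq_bigr => m _; rewrite mulr_suml big_seq [RHS]big_seq; apply: eq_bigr => s s_in.
move: (s_in); rewrite mem_chains => /andP[/eqP <- _].
by rewrite chain_weight_rcons (chains_last s_in).
Qed.

Lemma chain_sum_vanish W r : vanish_below r (chain_sum W r).
Proof.
elim: r => [|r IH] d lt_dr //; rewrite chain_sumS big1 // => m _.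
by rewrite IH ?mul0r // (leq_trans (ltn_ord m)).
Qed.

Definition qderiv f : pseries := fun n => f n *+ n.

Lemma qderiv_is_zmod_morphism : zmod_morphism qderiv.
Proof. by move=> f g; apply/funext => n; apply: mulrnBl. Qed.
HB.instance Definition _ :=
  GRing.isZmodMorphism.Build pseries pseries qderiv qderiv_is_zmod_morphism.

Lemma qderivM f g : qderiv (f * g) = qderiv f * g + f * qderiv g.
Proof.
apply/funext => n; rewrite /qderiv pseriesD !pseriesM -sumrMnl -big_split.
apply: eq_bigr => i _ /=; rewrite mulrnAl mulrnAr -mulrnDr subnKC //.
by rewrite -ltnS.
Qed.

Lemma qderivX f k : qderiv (f ^+ k.+1) = qderiv f * f ^+ k *+ k.+1.
Proof.
elim: k => [|k IH]; first by rewrite expr1 expr0 mulr1.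
by rewrite exprS qderivM IH mulrnAr mulrCA -exprS [RHS]mulrS.
Qed.

Lemma qderiv_inj f g : f 0%N = g 0%N -> qderiv f = qderiv g -> f = g.
Proof.
move=> eq0 eq_q; apply/funext => -[//|n]; apply: (@mulrnSI _ _ n).
exact: (congr1 (fun h => h n.+1) eq_q).
Qed.

Lemma qderiv_eq_mul_uniq f H1 H2 : f 0%N = 0 ->
  qderiv H1 = f * H1 -> qderiv H2 = f * H2 -> H1 0%N = H2 0%N -> H1 = H2.
Proof.
move=> f0 eqH1 eqH2 eq0; apply/funext => n; elim/ltn_ind: n => -[//|n] IH.
apply: (@mulrnSI _ _ n); change (qderiv H1 n.+1 = qderiv H2 n.+1).
move: (congr1 (fun h => h n.+1) eqH1) (congr1 (fun h => h n.+1) eqH2) => /= -> ->.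
rewrite !pseriesM !(big_ord_recl n.+1) f0 !mul0r !add0r; apply: eq_bigr => i _.
by rewrite IH // subSS ltnS leq_subr.
Qed.

Definition invfact (r : nat) : rat := (r`!)%:R^-1.

Lemma invfact_bin r j : (j <= r)%N ->
  invfact r * 'C(r, j)%:R = invfact j * invfact (r - j).
Proof.
move=> le_jr; rewrite /invfact -(bin_fact le_jr) !natrM !invfM mulrC !mulrA mulfV ?mul1r //.
by rewrite pnatr_eq0 -lt0n bin_gt0.
Qed.

(* Truncating at [r <= n] computes [sum_r F r / r!] only when each [F r]
   vanishes below [q^r]. *)
Definition esum F : pseries := fun n => \sum_(r < n.+1) invfact r *: F r n.

Lemma esum_widen F n N : (forall r, vanish_below r (F r)) -> (n <= N)%N ->
  esum F n = \sum_(r < N.+1) invfact r *: F r n.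
Proof.
move=> F_vanish le_nN.
apply: (@big_ord_widen_eq0 _ n.+1 N.+1 (fun r => invfact r *: F r n)) => // r.
by case/andP=> lt_nr _; rewrite F_vanish ?scaler0.
Qed.

Lemma qderiv_esum F : qderiv (esum F) = esum (fun r => qderiv (F r)).
Proof.
by apply/funext => n; rewrite /qderiv /esum -sumrMnl; apply: eq_bigr => r _; rewrite scalerMnr.
Qed.

Lemma esumM F G : (forall r, vanish_below r (F r)) -> (forall r, vanish_below r (G r)) ->
  esum F * esum G = esum (fun r => \sum_(j < r.+1) F j * G (r - j)%N *+ 'C(r, j)).
Proof.
move=> F_vanish G_vanish; apply/funext => n.
pose T j k := (invfact j * invfact k) *: (F j * G k) n.
have T_vanish j k : (n < j + k)%N -> T j k = 0.
  by move=> lt_n_jk; rewrite /T (vanish_belowM (F_vanish j) (G_vanish k)) ?scaler0.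
transitivity (\sum_(j < n.+1) \sum_(k < n.+1) T j k).
  rewrite pseriesM; under eq_bigr => i _ do
    rewrite (esum_widen F_vanish (leq_ord i)) (esum_widen G_vanish (leq_subr i n)).
  under eq_bigr do rewrite mulr_suml; rewrite exchange_big; apply: eq_bigr => j _.
  under eq_bigr do rewrite mulr_sumr; rewrite exchange_big; apply: eq_bigr => k _.
  by rewrite /T pseriesM scaler_sumr; apply: eq_bigr => i _; rewrite -scalerAl -scalerAr scalerA.
rewrite /esum; under [RHS]eq_bigr => r _ do
  rewrite pseries_sum scaler_sumr.
transitivity (\sum_(r < n.+1) \sum_(j < r.+1) T j (r - j)%N); last first.
  apply: eq_bigr => r _; apply: eq_bigr => j _.
  by rewrite pseriesMn -scaler_nat scalerA invfact_bin // -ltnS.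
rewrite (sum_triangle n (fun r j => T j (r - j)%N)); apply: eq_bigr => j _.
under [RHS]eq_bigr do rewrite addnK.
symmetry; apply: (@big_ord_widen_eq0 _ _ _ (T j)); first by rewrite ltnS leq_subr.
by move=> k /andP[lt_k _]; apply: T_vanish; move: lt_k (ltn_ord j); lia.
Qed.

Lemma psexp_esum g : psexp g = esum (fun k => g ^+ k).
Proof. by apply/funext => n; apply: eq_bigr => k _; rewrite pseriesX. Qed.

Lemma qderiv_psexp g : g 0%N = 0 -> qderiv (psexp g) = qderiv g * psexp g.
Proof.
move=> g0; pose E k := if k == 1%N then qderiv g else 0.
have E_vanish k : vanish_below k (E k).
  by rewrite /E; case: eqP => [-> [] | _ n] //.
have esumE : esum E = qderiv g.
  apply/funext => -[|n]; first by rewrite /esum big_ord1 /E /= pseries0 scaler0.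
  rewrite /esum !big_ord_recl big1 => [|i _]; last by rewrite /E /= pseries0 scaler0.
  by rewrite /E /= pseries0 scaler0 add0r addr0 /invfact /= invr1 scale1r.
have E_binomial k : \sum_(j < k.+1) E j * g ^+ (k - j) *+ 'C(k, j) = qderiv (g ^+ k).
  case: k => [|k].
    by rewrite big_ord1 /E /= mul0r mul0rn expr0 derivation1 //; apply: qderivM.
  rewrite !big_ord_recl big1 ?addr0 => [|i _]; last by rewrite /E /= mul0r mul0rn.
  by rewrite /E /= mul0r mul0rn add0r subn1 bin1 qderivX.
rewrite psexp_esum qderiv_esum -esumE esumM //; last by move=> k; apply: vanish_belowX.
by congr esum; apply/funext => k; rewrite E_binomial.
Qed.

End PowerSeriesCalculus.

Section Logarithm.
Variables (A : comAlgType rat) (x y : nat -> A).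
Local Notation pseries := (pseries A).

Definition Fser_weight (i a b : nat) : A := y (b - a)%N + x (b - a)%N * a%:R.
Definition ylog_weight (i a b : nat) : A :=
  if i == 0%N then y b else x (b - a)%N * a%:R.
Local Notation P := (chain_sum Fser_weight).
Local Notation Q := (chain_sum ylog_weight).

Definition Xser : pseries := fun k => if k == 0%N then 0 else x k.
Definition Yser : pseries := fun k => if k == 0%N then 0 else y k.

Lemma Fser_esum : Fser x y = esum P.
Proof.
apply/funext => d; apply: eq_bigr => r _.
by rewrite /chain_sum -scaler_sumr -big_tuple_chains.
Qed.

Lemma ylog_esum : ylog x y = esum Q.
Proof.
apply/funext => d; apply: eq_bigr => r _.
rewrite /chain_sum -scaler_sumr -big_tuple_chains; congr (_ *: _).
apply: eq_bigr => t _; apply: eq_bigr => i _; rewrite /ylog_weight.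
by case: (nat_of_ord i =P 0%N) => [->|].
Qed.

Lemma P_rec r : P r.+1 = P r * Yser + qderiv (P r) * Xser.
Proof.
apply/funext => d; rewrite pseriesD !pseriesM_last // chain_sumS -big_split.
apply: eq_bigr => m _ /=; rewrite /Yser /Xser /qderiv /Fser_weight subn_eq0 leqNgt ltn_ord.
by rewrite mulrDr mulr_natr mulrnAr mulrnAl.
Qed.

Lemma Q1 : Q 1 = Yser.
Proof.
apply/funext => -[|d]; rewrite chain_sumS ?big_ord0 // big_ord_recl big1 ?addr0.
  by rewrite chain_sum0 pseries1 mul1r.
by move=> i _; rewrite chain_sum0 pseries1 mul0r.
Qed.

Lemma Q_rec j : Q j.+2 = qderiv (Q j.+1) * Xser.
Proof.
apply/funext => d; rewrite pseriesM_last // chain_sumS; apply: eq_bigr => m _.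
by rewrite /ylog_weight /Xser /qderiv subn_eq0 leqNgt ltn_ord /= mulr_natr mulrnAr mulrnAl.
Qed.

Lemma qderiv_Fser : qderiv (Fser x y) = qderiv (ylog x y) * Fser x y.
Proof.
have vanish_qderivQ r : vanish_below r (qderiv (Q r)).
  by move=> n lt_nr; rewrite /qderiv chain_sum_vanish ?mul0rn.
rewrite Fser_esum ylog_esum !qderiv_esum (esumM vanish_qderivQ (chain_sum_vanish _)).
congr esum; apply/funext => r.
exact: (derivation_expansion (@qderivM A) (chain_sum0 _) P_rec (chain_sum0 _) Q1 Q_rec).
Qed.

End Logarithm.

Theorem mainTheorem17 (A : comAlgType rat) (x y : nat -> A) :
  psexp (fun d => if d == 0%N then 0 else ylog x y d) = Fser x y /\
  (forall y' : nat -> A,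
     psexp (fun d => if d == 0%N then 0 else y' d) = Fser x y ->
     forall d : nat, (0 < d)%N -> y' d = ylog x y d).
Proof.
set G := fun d => _.
have qderivG : qderiv (G : pseries A) = qderiv (ylog x y) by apply/funext => -[].
have F0 : Fser x y 0%N = 1.
  by rewrite Fser_esum /esum big_ord1 chain_sum0 pseries1 /invfact /= invr1 scale1r.
have psexp0 (g : pseries A) : psexp g 0%N = 1.
  by rewrite /psexp big_ord1 /= invr1 scale1r.
have expG : psexp G = Fser x y.
  apply: (qderiv_eq_mul_uniq (f := qderiv G)) => //.
  - exact: qderiv_psexp.
  - by rewrite qderivG qderiv_Fser.
  - by rewrite psexp0 F0.
split=> // y' expG' d d_gt0.
set G' := fun d => _ in expG'.
have : G' = G.
  apply: qderiv_inj => //; apply: (pseries_mulIf F0).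
  by rewrite -[in LHS]expG' -qderiv_psexp // expG' qderivG qderiv_Fser.
by move/(congr1 (fun h => h d)); rewrite /G' /G; case: d d_gt0 => //= d _ ->.
Qed.
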